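(* Let $([v_{ij}:v_{ji}])$ be common lines data for planes $P_1,\dots,P_N$ and fix a triple $(i,j,k)$ of distinct indices that strictly satisfies the spherical triangle inequalities. Then there exist frames $F_i,F_j,F_k$ in generic position which realize the common line pairs $[v_{ij}:v_{ji}]$, $[v_{ik}:v_{ki}]$, $[v_{jk}:v_{kj}]$, i.e. $\iota_i(v_{ij})=\iota_j(v_{ji})$, $\iota_i(v_{ik})=\iota_k(v_{ki})$, $\iota_j(v_{jk})=\iota_k(v_{kj})$. Moreover, if $G_i,G_j,G_k$ are any other frames realizing these same three pairs, then there is $A\in\mathrm O(3)$ with $(AF_i,AF_j,AF_k)=(G_i,G_j,G_k)$.
   Context: A frame is an ordered pair $(a,b)$ of orthonormal vectors in $\mathbb R^3$. Planes $P_1=\dots=P_N=\mathbb R^2$; a frame $F_i=(a_i,b_i)$ gives the embedding $\iota_i:P_i\to\mathbb R^3$, $\iota_i(x,y)=xa_i+yb_i$. Frames are in generic position if their planes $\iota(P)$ are pairwise distinct and the pairwise intersection lines are pairwise distinct. $\mathrm O(3)$ is the group of all $3\times3$ orthogonal matrices, acting on frames by $A(a,b)=(Aa,Ab)$. Common lines data is a collection $([v_{ij}:v_{ji}])_{1\le i<j\le N}$ of elements of $\mathbb P(P_i\times P_j)$ (nonzero pairs $(v_{ij},v_{ji})\in\mathbb R^2\times\mathbb R^2$ up to nonzero scaling) with $\|v_{ij}\|^2=\|v_{ji}\|^2$; indices of a pair may be written in either order. For a triple $(i,j,k)$ and chosen representatives set $\alpha_{ijk}=\cos^{-1}\frac{v_{ij}\cdot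 v_{ik}}{\|v_{ij}\|\|v_{ik}\|}$, $\beta_{ijk}=\cos^{-1}\frac{v_{ji}\cdot v_{jk}}{\|v_{ji}\|\|v_{jk}\|}$, $\gamma_{ijk}=\cos^{-1}\frac{v_{ki}\cdot v_{kj}}{\|v_{ki}\|\|v_{kj}\|}$. The triple strictly satisfies the spherical triangle inequalities if for any choice of representatives $\beta+\gamma>\alpha$, $\alpha+\gamma>\beta$, $\alpha+\beta>\gamma$, $\alpha+\beta+\gamma<2\pi$ (with $\alpha=\alpha_{ijk}$ etc.). *)

From HB Require Import structures.
From mathcomp Require Import all_boot all_order all_algebra.
From mathcomp Require Import all_classical all_reals all_analysis.
Set Implicit Arguments. Unset Strict Implicit. Unset Printing Implicit Defensive.
Import Order.TTheory GRing.Theory Num.Theory.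
Local Open Scope ring_scope.

Section Defs.
Variable R : realType.

Definition dot n (u w : 'cV[R]_n) : R := (u^T *m w) 0 0.
Definition vnorm n (u : 'cV[R]_n) : R := Num.sqrt (dot u u).

Definition angle n (u w : 'cV[R]_n) : R := acos (dot u w / (vnorm u * vnorm w)).

Definition frame := ('cV[R]_3 * 'cV[R]_3)%type.
Definition is_frame (F : frame) : Prop :=
  dot F.1 F.1 = 1 /\ dot F.2 F.2 = 1 /\ dot F.1 F.2 = 0.

Definition iota (F : frame) (x : 'cV[R]_2) : 'cV[R]_3 := x 0 0 *: F.1 + x 1 0 *: F.2.

(* The plane iota_F(P) = span(a,b), as a row space (rows a^T, b^T). *)
Definition plane (F : frame) : 'M[R]_(2, 3) := col_mx F.1^T F.2^T.

Definition generic3 (F1 F2 F3 : frame) : Prop :=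
  let P1 := plane F1 in let P2 := plane F2 in let P3 := plane F3 in
  [/\ ~~ (P1 == P2)%MS, ~~ (P1 == P3)%MS & ~~ (P2 == P3)%MS] /\
  [/\ ~~ ((P1 :&: P2) == (P1 :&: P3))%MS,
      ~~ ((P1 :&: P2) == (P2 :&: P3))%MS &
      ~~ ((P1 :&: P3) == (P2 :&: P3))%MS].

Definition orthogonal3 (A : 'M[R]_3) : Prop := A *m A^T = 1%:M.

Definition act (A : 'M[R]_3) (F : frame) : frame := (A *m F.1, A *m F.2).

(* Common lines data, given by representatives v i j (= v_ij in P_i), with
   the pair (v i j, v j i) representing [v_ij : v_ji] for i <> j. *)
Definition common_lines_data N (v : 'I_N -> 'I_N -> 'cV[R]_2) : Prop :=
  forall i j : 'I_N, i != j ->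
    (v i j != 0 \/ v j i != 0) /\ dot (v i j) (v i j) = dot (v j i) (v j i).

(* Strict spherical triangle inequalities for the triple (i,j,k), for every
   choice of representatives (c1,c2,c3 nonzero rescale the pairs
   {i,j}, {i,k}, {j,k}). *)
Definition strict_spherical_triangle N (v : 'I_N -> 'I_N -> 'cV[R]_2)
    (i j k : 'I_N) : Prop :=
  forall c1 c2 c3 : R, c1 != 0 -> c2 != 0 -> c3 != 0 ->
    let alpha := angle (c1 *: v i j) (c2 *: v i k) in
    let beta  := angle (c1 *: v j i) (c3 *: v j k) in
    let gamma := angle (c2 *: v k i) (c3 *: v k j) in
    [/\ beta + gamma > alpha, alpha + gamma > beta, alpha + beta > gamma &
        alpha + beta + gamma < 2 * pi].

Definition realizes (Fi Fj : frame) (vij vji : 'cV[R]_2) : Prop :=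
  iota Fi vij = iota Fj vji.

End Defs.

From Pilot Require Import Defs.
From HB Require Import structures.
From mathcomp Require Import all_boot all_order all_algebra.
From mathcomp Require Import all_classical all_reals all_analysis.
From mathcomp Require Import ring lra.
Import Order.TTheory GRing.Theory Num.Theory.
Set Implicit Arguments. Unset Strict Implicit. Unset Printing Implicit Defensive.
Local Open Scope ring_scope.

(* The common lines of frames realizing the three pairs are vectors U_ij, U_ik, U_jk of R^3
   whose Gram matrix is dictated by the data: the norms |v_ij| and the cosines of the angles
   alpha, beta, gamma.  Its determinant, divided by the squared norms, factors as
   (cos (alpha - beta) - cos gamma) (cos gamma - cos (alpha + beta)), so the strict spherical
   triangle inequalities say precisely that this Gram matrix is positive definite; a Cholesky
   factorisation then realises it by three independent vectors.  A frame is determined by the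
   images of two independent vectors of its plane, which gives the frames; independence of the
   three lines gives generic position; and the common lines of any other realisation have the
   same Gram matrix, hence are moved onto ours by an orthogonal map. *)

Section Realization.
Variable R : realType.
Implicit Types (p q x y : 'cV[R]_2) (F G : frame R).

Lemma sum_ord2 (V : zmodType) (f : 'I_2 -> V) : \sum_(c < 2) f c = f 0 + f 1.
Proof. rewrite !big_ord_recl big_ord0 addr0; congr (f _ + f _); exact: val_inj. Qed.

Lemma sum_ord3 (V : zmodType) (f : 'I_3 -> V) : \sum_(c < 3) f c = f 0 + f 1 + f 2.
Proof.
rewrite !big_ord_recl big_ord0 addr0 addrA; congr (f _ + f _ + f _); exact: val_inj.
Qed.

Lemma ord2P (r : 'I_2) : r = 0 \/ r = 1.
Proof. by case: r => [[|[|//]] ?]; [left | right]; apply/val_inj. Qed.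

Lemma dotC n (u w : 'cV[R]_n) : dot u w = dot w u.
Proof. by rewrite /dot !mxE; apply: eq_bigr => l _; rewrite !mxE mulrC. Qed.

Lemma dotDl n (u u' w : 'cV[R]_n) : dot (u + u') w = dot u w + dot u' w.
Proof. by rewrite /dot !mxE -big_split; apply: eq_bigr => l _; rewrite !mxE mulrDl. Qed.

Lemma dotZl n a (u w : 'cV[R]_n) : dot (a *: u) w = a * dot u w.
Proof. by rewrite /dot !mxE mulr_sumr; apply: eq_bigr => l _; rewrite !mxE mulrA. Qed.

Lemma dotDr n (u w w' : 'cV[R]_n) : dot u (w + w') = dot u w + dot u w'.
Proof. by rewrite dotC dotDl !(dotC u). Qed.

Lemma dotZr n a (u w : 'cV[R]_n) : dot u (a *: w) = a * dot u w.
Proof. by rewrite dotC dotZl dotC. Qed.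

Lemma dot_lincomb2 n (u w : 'cV[R]_n) a b c d :
  dot (a *: u + b *: w) (c *: u + d *: w) =
  a * c * dot u u + (a * d + b * c) * dot u w + b * d * dot w w.
Proof. rewrite !(dotDl, dotDr, dotZl, dotZr) (dotC w u); ring. Qed.

Lemma dot_ge0 n (u : 'cV[R]_n) : 0 <= dot u u.
Proof. by rewrite /dot mxE; apply: sumr_ge0 => l _; rewrite !mxE -expr2 sqr_ge0. Qed.

Lemma dot_gt0 n (u : 'cV[R]_n) : u != 0 -> 0 < dot u u.
Proof.
rewrite lt_def dot_ge0 andbT; apply: contra => d0; apply/eqP/matrixP => l m.
move: d0; rewrite (ord1 m) /dot mxE psumr_eq0 => [/allP/(_ l (mem_index_enum l))|l' _].
  by rewrite /= !mxE mulf_eq0 orbb => /eqP.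
by rewrite !mxE -expr2 sqr_ge0.
Qed.

Lemma vnorm_sqr n (u : 'cV[R]_n) : vnorm u ^+ 2 = dot u u.
Proof. exact/sqr_sqrtr/dot_ge0. Qed.

Lemma vnorm_gt0 n (u : 'cV[R]_n) : 0 < dot u u -> 0 < vnorm u.
Proof. by rewrite /vnorm sqrtr_gt0. Qed.

Lemma dot_cV2 p q : dot p q = p 0 0 * q 0 0 + p 1 0 * q 1 0.
Proof. by rewrite /dot mxE sum_ord2 !mxE. Qed.

Definition det2 p q : R := p 0 0 * q 1 0 - p 1 0 * q 0 0.

Lemma det2_sqr p q : det2 p q ^+ 2 = dot p p * dot q q - dot p q ^+ 2.
Proof. rewrite /det2 !dot_cV2; ring. Qed.

Lemma det2_basis p q y : det2 p q != 0 ->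
  y = (det2 y q / det2 p q) *: p + (det2 p y / det2 p q) *: q.
Proof.
rewrite /det2 => d0; apply/matrixP => r c; rewrite (ord1 c) !mxE.
by case: (ord2P r) => ->; field.
Qed.

Lemma iota_lincomb2 F a b p q :
  Defs.iota F (a *: p + b *: q) = a *: Defs.iota F p + b *: Defs.iota F q.
Proof. by apply/matrixP => r c; rewrite !mxE; ring. Qed.

Lemma iota_isometry F x y : is_frame F -> dot (Defs.iota F x) (Defs.iota F y) = dot x y.
Proof. by case=> h11 [h22 h12]; rewrite dot_lincomb2 h11 h22 h12 dot_cV2; ring. Qed.

Lemma iota_act (A : 'M[R]_3) F x : Defs.iota (act A F) x = A *m Defs.iota F x.
Proof. by rewrite /Defs.iota /act /= mulmxDr !scalemxAr. Qed.

Lemma frame_eq_of_iota F G p q : det2 p q != 0 ->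
  Defs.iota F p = Defs.iota G p -> Defs.iota F q = Defs.iota G q -> F = G.
Proof.
move=> d0 Fp Fq.
have eFG y : Defs.iota F y = Defs.iota G y by rewrite (det2_basis y d0) !iota_lincomb2 Fp Fq.
have e1 := eFG (delta_mx 0 0); have e2 := eFG (delta_mx 1 0).
rewrite /Defs.iota !mxE /= !(scale1r, scale0r, addr0, add0r) in e1 e2.
by clear -e1 e2; case: F G e1 e2 => [a b] [a' b'] /= -> ->.
Qed.

Definition gram2_eq m n (u w : 'cV[R]_m) (u' w' : 'cV[R]_n) : Prop :=
  [/\ dot u' u' = dot u u, dot w' w' = dot w w & dot u' w' = dot u w].

Lemma exists_frame_through p q (P Q : 'cV[R]_3) : det2 p q != 0 -> gram2_eq p q P Q ->
  exists2 F, is_frame F & Defs.iota F p = P /\ Defs.iota F q = Q.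
Proof.
move=> d0 [ePP eQQ ePQ]; set d := det2 p q.
exists ((q 1 0 / d) *: P + (- p 1 0 / d) *: Q, (- q 0 0 / d) *: P + (p 0 0 / d) *: Q).
  rewrite /is_frame /= !dot_lincomb2 ePP eQQ ePQ !dot_cV2 /d; rewrite /det2 in d0 *.
  by split; [|split]; field.
by split; apply/matrixP => r c; rewrite !mxE /d; rewrite /det2 in d0 *; field.
Qed.

Lemma plane0 F r : plane F 0 r = F.1 r 0.
Proof.
rewrite /plane; have -> : (0 : 'I_2) = @lshift 1 1 ord0 by apply/val_inj.
by have := col_mxEu F.1^T F.2^T ord0 r; rewrite [in RHS]mxE.
Qed.

Lemma plane1 F r : plane F 1 r = F.2 r 0.
Proof.
rewrite /plane; have -> : (1 : 'I_2) = @rshift 1 1 ord0 by apply/val_inj.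
by have := col_mxEd F.1^T F.2^T ord0 r; rewrite [in RHS]mxE.
Qed.

Lemma iota_plane F x : (Defs.iota F x)^T = x^T *m plane F.
Proof.
by apply/matrixP => a r; rewrite (ord1 a) [RHS]mxE sum_ord2 plane0 plane1 !mxE.
Qed.

Lemma iota_sub_plane F x : ((Defs.iota F x)^T <= plane F)%MS.
Proof. by rewrite iota_plane submxMl. Qed.

Lemma sub_plane_lincomb F p q w : det2 p q != 0 -> (w^T <= plane F)%MS ->
  exists a b, w = a *: Defs.iota F p + b *: Defs.iota F q.
Proof.
move=> d0 /submxP[D /(congr1 trmx)]; rewrite trmxK -[D]trmxK -iota_plane trmxK => ->.
by rewrite (det2_basis D^T d0) iota_lincomb2; do 2 eexists.
Qed.

Definition mx_of_cols n (U : 'I_n -> 'cV[R]_n) : 'M[R]_n := \matrix_(l, c) U c l 0.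

Lemma col_mx_of_cols n (U : 'I_n -> 'cV[R]_n) c : col c (mx_of_cols U) = U c.
Proof. by apply/matrixP => l m; rewrite (ord1 m) !mxE. Qed.

Lemma mx_of_colsMv n (U : 'I_n -> 'cV[R]_n) (x : 'cV[R]_n) :
  mx_of_cols U *m x = \sum_c x c 0 *: U c.
Proof.
apply/matrixP => l m; rewrite (ord1 m) !mxE summxE.
by apply: eq_bigr => c _; rewrite !mxE mulrC.
Qed.

Lemma gram_mx_of_cols n (U : 'I_n -> 'cV[R]_n) a b :
  ((mx_of_cols U)^T *m mx_of_cols U) a b = dot (U a) (U b).
Proof. by rewrite /dot !mxE; apply: eq_bigr => l _; rewrite !mxE. Qed.

Lemma gram_eq_sym m n (U V : 'I_m -> 'cV[R]_n) :
  (forall a b : 'I_m, a <= b -> dot (U a) (U b) = dot (V a) (V b))%N ->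
  forall a b, dot (U a) (U b) = dot (V a) (V b).
Proof.
move=> h a b; case: (leqP a b) => [/h //| /ltnW/h].
by rewrite dotC (dotC (V b)).
Qed.

Lemma orthogonal_map_of_gram n (U V : 'I_n -> 'cV[R]_n) :
  mx_of_cols U \in unitmx -> (forall a b, dot (U a) (U b) = dot (V a) (V b)) ->
  exists2 A : 'M[R]_n, A *m A^T = 1%:M & forall c, A *m U c = V c.
Proof.
set T := mx_of_cols U; set T' := mx_of_cols V => uT gram.
have TT : T^T *m T = T'^T *m T' by apply/matrixP => a b; rewrite !gram_mx_of_cols.
exists (T' *m invmx T) => [|c].
  apply: mulmx1C; rewrite trmx_mul mulmxA -(mulmxA _ T'^T) -TT mulmxA -trmx_mul.
  by rewrite -mulmxA mulmxV // trmx1 mul1mx.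
by rewrite -!(col_mx_of_cols _ c) -/T -/T' !colE mulmxA mulmxKV.
Qed.

Definition cols3 n (U0 U1 U2 : 'cV[R]_n) (c : 'I_3) : 'cV[R]_n := [:: U0; U1; U2]`_c.

Definition vec3 (a b c : R) : 'cV[R]_3 := \col_l [:: a; b; c]`_l.

Lemma dot_vec3 a b c a' b' c' :
  dot (vec3 a b c) (vec3 a' b' c') = a * a' + b * b' + c * c'.
Proof. by rewrite /dot mxE sum_ord3 !mxE. Qed.

Lemma cols3_free (U0 U1 U2 : 'cV[R]_3) a b c :
  mx_of_cols (cols3 U0 U1 U2) \in unitmx -> a *: U0 + b *: U1 + c *: U2 = 0 ->
  [/\ a = 0, b = 0 & c = 0].
Proof.
move=> uU h; have : mx_of_cols (cols3 U0 U1 U2) *m vec3 a b c = 0.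
  by rewrite mx_of_colsMv sum_ord3 !mxE.
move/(congr1 (mulmx (invmx (mx_of_cols (cols3 U0 U1 U2))))).
rewrite mulKmx // mulmx0 => /matrixP e.
by have := (e 0 0, e 1 0, e 2 0); rewrite !mxE => -[[]].
Qed.

Lemma cols3_trig_unit a b c d e f : a * c * f != 0 ->
  mx_of_cols (cols3 (vec3 a 0 0) (vec3 b c 0) (vec3 d e f)) \in unitmx.
Proof.
move=> acf; rewrite -unitmx_tr unitmxE det_trig.
  by rewrite !big_ord_recl big_ord0 !mxE /= mulr1 unitfE mulrA.
apply/is_trig_mxP => l m; case: l => [[|[|[|//]]] ?]; case: m => [[|[|[|//]]] ?] //= _.
all: by rewrite !mxE.
Qed.

Lemma generic3_of_lines Fi Fj Fk (U0 U1 U2 : 'cV[R]_3) :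
  (U0^T <= plane Fi :&: plane Fj)%MS -> (U1^T <= plane Fi :&: plane Fk)%MS ->
  (U2^T <= plane Fj :&: plane Fk)%MS ->
  ~~ (U2^T <= plane Fi)%MS -> ~~ (U1^T <= plane Fj)%MS -> ~~ (U0^T <= plane Fk)%MS ->
  generic3 Fi Fj Fk.
Proof.
move=> l0 l1 l2 n2 n1 n0; move: (l0) (l1) (l2).
rewrite !sub_capmx => /andP[_ u0j] /andP[_ u1k] /andP[u2j u2k].
rewrite /generic3 /=; split; split; apply/negP => /andP[sub sup].
- by rewrite (submx_trans u2j sup) in n2.
- by rewrite (submx_trans u2k sup) in n2.
- by rewrite (submx_trans u1k sup) in n1.
- by rewrite (submx_trans (submx_trans l0 sub) (capmxSr _ _)) in n0.
- by rewrite (submx_trans (submx_trans l0 sub) (capmxSr _ _)) in n0.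
- by rewrite (submx_trans (submx_trans l1 sub) (capmxSl _ _)) in n1.
Qed.

Lemma cos_lt_of_lt (x y : R) : 0 <= x -> y <= pi -> x < y -> cos y < cos x.
Proof.
move=> x0 ypi xy; have pi0 : 0 <= pi :> R by lra.
by rewrite ltr_cos // in_itv /= ?x0 ?ypi; apply/andP; split; lra.
Qed.

Lemma cos_sqr_lt1 (x : R) : 0 < x < pi -> cos x ^+ 2 < 1.
Proof.
case/andP=> x0 xpi.
have := cos_lt_of_lt (lexx 0) (ltW xpi) x0; rewrite cos0.
have := cos_lt_of_lt (ltW x0) (lexx pi) xpi; rewrite cospi.
nra.
Qed.

(* The determinant of the Gram matrix [[1, ca, cb], [ca, 1, cc], [cb, cc, 1]]. *)
Definition cos_gram_det (ca cb cc : R) : R :=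
  1 - ca ^+ 2 - cb ^+ 2 - cc ^+ 2 + 2 * ca * cb * cc.

Lemma cos_gram_detE al be ga : cos_gram_det (cos al) (cos be) (cos ga) =
  (cos (al - be) - cos ga) * (cos ga - cos (al + be)).
Proof.
rewrite /cos_gram_det.
transitivity (sin al ^+ 2 * sin be ^+ 2 - (cos ga - cos al * cos be) ^+ 2).
  by rewrite !sin2cos2; ring.
by rewrite cosB cosD; ring.
Qed.

Lemma spherical_triangle_cos (al be ga : R) :
  0 <= al <= pi -> 0 <= be <= pi -> 0 <= ga <= pi ->
  be + ga > al -> al + ga > be -> al + be > ga -> al + be + ga < 2 * pi ->
  [/\ cos al ^+ 2 < 1, cos be ^+ 2 < 1, cos ga ^+ 2 < 1 &
      0 < cos_gram_det (cos al) (cos be) (cos ga)].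
Proof.
move=> /andP[al0 alpi] /andP[be0 bepi] /andP[ga0 gapi] t1 t2 t3 t4.
split; try by apply: cos_sqr_lt1; apply/andP; split; lra.
rewrite cos_gram_detE; apply: mulr_gt0; rewrite subr_gt0.
- have [bal|alb] := lerP be al; first by apply: cos_lt_of_lt; lra.
  by rewrite -[cos (al - be)]cosN opprB; apply: cos_lt_of_lt; lra.
- have [abpi|piab] := lerP (al + be) pi; first by apply: cos_lt_of_lt; lra.
  rewrite -[cos (al + be)]cosN -(cosD2pi (- _)) -mulr_natl.
  by apply: cos_lt_of_lt; lra.
Qed.

Lemma angle_cos p q : 0 < dot p p -> 0 < dot q q ->
  0 <= angle p q <= pi /\ dot p q = vnorm p * vnorm q * cos (angle p q).
Proof.
move=> pp qq; set s := vnorm p * vnorm q.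
have s0 : 0 < s by rewrite mulr_gt0 ?vnorm_gt0.
set x := dot p q / s; have xs : x * s = dot p q by rewrite divfK ?gt_eqF.
have x2 : x ^+ 2 <= 1.
  rewrite -(ler_pM2r (exprn_gt0 2 s0)) mul1r -exprMn xs exprMn !vnorm_sqr.
  by rewrite -subr_ge0 -det2_sqr sqr_ge0.
have x1 : -1 <= x <= 1 by apply/andP; split; nra.
by rewrite /angle -/s -/x acos_ge0 ?acos_lepi // acosK ?in_itv //= mulrC.
Qed.

Lemma det2_neq0 p q : 0 < dot p p -> 0 < dot q q -> cos (angle p q) ^+ 2 < 1 ->
  det2 p q != 0.
Proof.
move=> pp qq c1; have [_ e] := angle_cos pp qq; have ppqq := mulr_gt0 pp qq.
rewrite -sqrf_eq0 gt_eqF // det2_sqr e !exprMn !vnorm_sqr; nra.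
Qed.

(* The vectors are the columns of the upper triangular Cholesky factor of the Gram matrix. *)
Lemma gram3_realizable (r1 r2 r3 ca cb cc : R) : 0 < r1 -> 0 < r2 -> 0 < r3 ->
  ca ^+ 2 < 1 -> 0 < cos_gram_det ca cb cc ->
  exists U0 U1 U2, mx_of_cols (cols3 U0 U1 U2) \in unitmx /\
    [/\ dot U0 U0 = r1 ^+ 2, dot U1 U1 = r2 ^+ 2 & dot U2 U2 = r3 ^+ 2] /\
    [/\ dot U0 U1 = r1 * r2 * ca, dot U0 U2 = r1 * r3 * cb & dot U1 U2 = r2 * r3 * cc].
Proof.
move=> r1p r2p r3p ca1 det0; rewrite /cos_gram_det in det0.
set sa := Num.sqrt (1 - ca ^+ 2).
have sap : 0 < sa by rewrite sqrtr_gt0 subr_gt0.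
have sas : sa ^+ 2 = 1 - ca ^+ 2 by rewrite sqr_sqrtr // subr_ge0 ltW.
set t := (cc - ca * cb) / sa.
have sat : sa * t = cc - ca * cb by rewrite mulrC divfK ?gt_eqF.
have tu : 0 < 1 - cb ^+ 2 - t ^+ 2.
  have -> : 1 - cb ^+ 2 - t ^+ 2 =
      (1 - ca ^+ 2 - cb ^+ 2 - cc ^+ 2 + 2 * ca * cb * cc) / sa ^+ 2.
    by rewrite /t expr_div_n sas; field; rewrite -sas sqrf_eq0 gt_eqF.
  by rewrite divr_gt0 // exprn_gt0.
set u := Num.sqrt (1 - cb ^+ 2 - t ^+ 2).
have up : 0 < u by rewrite sqrtr_gt0.
have us : u ^+ 2 = 1 - cb ^+ 2 - t ^+ 2 by rewrite sqr_sqrtr // ltW.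
exists (vec3 r1 0 0), (vec3 (r2 * ca) (r2 * sa) 0), (vec3 (r3 * cb) (r3 * t) (r3 * u)).
split; first by rewrite cols3_trig_unit // !mulf_neq0 ?gt_eqF.
rewrite !dot_vec3; split; split; try ring.
- by rewrite -[r2 ^+ 2]mulr1 -[1](subrK (ca ^+ 2)) -sas; ring.
- by rewrite -[r3 ^+ 2]mulr1 -[1](subrK (cb ^+ 2)) -[1 - _](subrK (t ^+ 2)) -us; ring.
- by rewrite -[cc](subrK (ca * cb)) -sat; ring.
Qed.

Section FramesThroughCommonLines.
Variables (pij pik pji pjk pki pkj : 'cV[R]_2) (Fi Fj Fk : frame R).
Hypotheses (di : det2 pij pik != 0) (dj : det2 pji pjk != 0) (dk : det2 pki pkj != 0).
Hypotheses (rij : realizes Fi Fj pij pji) (rik : realizes Fi Fk pik pki)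
  (rjk : realizes Fj Fk pjk pkj).
Hypothesis free :
  mx_of_cols (cols3 (Defs.iota Fi pij) (Defs.iota Fi pik) (Defs.iota Fj pjk)) \in unitmx.

Lemma generic3_of_free : generic3 Fi Fj Fk.
Proof.
have indep := cols3_free free.
apply: (generic3_of_lines (U0 := Defs.iota Fi pij) (U1 := Defs.iota Fi pik)
                          (U2 := Defs.iota Fj pjk)).
- by rewrite sub_capmx iota_sub_plane rij iota_sub_plane.
- by rewrite sub_capmx iota_sub_plane rik iota_sub_plane.
- by rewrite sub_capmx iota_sub_plane rjk iota_sub_plane.
- apply/negP => /(sub_plane_lincomb di)[a [b e]].
  suff [_ _ /eqP] : [/\ a = 0, b = 0 & -1 = 0 :> R] by rewrite oppr_eq0 oner_eq0.
  by apply: indep; rewrite e scaleN1r subrr.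
- apply/negP => /(sub_plane_lincomb dj)[a [b e]]; rewrite -rij in e.
  suff [_ /eqP] : [/\ a = 0, -1 = 0 :> R & b = 0] by rewrite oppr_eq0 oner_eq0.
  by apply: indep; rewrite e scaleN1r opprD addrA subrr add0r addNr.
- apply/negP => /(sub_plane_lincomb dk)[a [b e]]; rewrite -rik -rjk in e.
  suff [/eqP] : [/\ -1 = 0 :> R, a = 0 & b = 0] by rewrite oppr_eq0 oner_eq0.
  by apply: indep; rewrite e scaleN1r -addrA addNr.
Qed.

Lemma realizing_frames_unique : is_frame Fi -> is_frame Fj -> is_frame Fk ->
  forall Gi Gj Gk, is_frame Gi -> is_frame Gj -> is_frame Gk ->
  realizes Gi Gj pij pji -> realizes Gi Gk pik pki -> realizes Gj Gk pjk pkj ->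
  exists A : 'M[R]_3, orthogonal3 A /\ (act A Fi, act A Fj, act A Fk) = (Gi, Gj, Gk).
Proof.
move=> fi fj fk Gi Gj Gk gi gj gk sij sik sjk.
have gram : forall a b,
    dot (cols3 (Defs.iota Fi pij) (Defs.iota Fi pik) (Defs.iota Fj pjk) a)
        (cols3 (Defs.iota Fi pij) (Defs.iota Fi pik) (Defs.iota Fj pjk) b) =
    dot (cols3 (Defs.iota Gi pij) (Defs.iota Gi pik) (Defs.iota Gj pjk) a)
        (cols3 (Defs.iota Gi pij) (Defs.iota Gi pik) (Defs.iota Gj pjk) b).
  apply: gram_eq_sym => -[[|[|[|//]]] ?] [[|[|[|//]]] ?] //= _; rewrite /cols3 /=.
  - by rewrite !iota_isometry.
  - by rewrite !iota_isometry.
  - by rewrite rij sij !iota_isometry.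
  - by rewrite !iota_isometry.
  - by rewrite rik rjk sik sjk !iota_isometry.
  - by rewrite !iota_isometry.
have [A oA AU] := orthogonal_map_of_gram free gram.
have := AU 2; have := AU 1; have := AU 0; rewrite /cols3 /= => A0 A1 A2.
exists A; split => //; congr (_, _, _).
- by apply: (frame_eq_of_iota di); rewrite iota_act ?A0 ?A1.
- by apply: (frame_eq_of_iota dj); rewrite iota_act -?rij ?A0 ?A2 ?sij.
- by apply: (frame_eq_of_iota dk); rewrite iota_act -?rik -?rjk ?A1 ?A2 ?sik ?sjk.
Qed.

End FramesThroughCommonLines.

Section CommonLinesTriple.
Variables (N : nat) (v : 'I_N -> 'I_N -> 'cV[R]_2) (i j k : 'I_N).
Hypothesis cl : common_lines_data v.

Lemma common_line_dot_gt0 a b : a != b ->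
  0 < dot (v a b) (v a b) /\ 0 < dot (v b a) (v b a).
Proof.
move=> ab; have [nz e] := cl ab.
suff pos : 0 < dot (v a b) (v a b) by rewrite -e.
by case: nz => /dot_gt0; rewrite ?e.
Qed.

Lemma common_line_vnorm a b : a != b -> vnorm (v b a) = vnorm (v a b).
Proof. by move=> ab; rewrite /vnorm (cl ab).2. Qed.

Hypotheses (ij : i != j) (ik : i != k) (jk : j != k).
Hypothesis triangle : strict_spherical_triangle v i j k.

Lemma common_lines_gram : exists U0 U1 U2,
  mx_of_cols (cols3 U0 U1 U2) \in unitmx /\
  [/\ det2 (v i j) (v i k) != 0, det2 (v j i) (v j k) != 0 & det2 (v k i) (v k j) != 0] /\
  [/\ gram2_eq (v i j) (v i k) U0 U1, gram2_eq (v j i) (v j k) U0 U2 &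
      gram2_eq (v k i) (v k j) U1 U2].
Proof.
have [ij0 ji0] := common_line_dot_gt0 ij.
have [ik0 ki0] := common_line_dot_gt0 ik.
have [jk0 kj0] := common_line_dot_gt0 jk.
have [al_pi Dal] := angle_cos ij0 ik0.
have [be_pi Dbe] := angle_cos ji0 jk0.
have [ga_pi Dga] := angle_cos ki0 kj0.
have := triangle (oner_neq0 R) (oner_neq0 R) (oner_neq0 R).
rewrite /= !scale1r => -[t1 t2 t3 t4].
have [ca1 cb1 cc1 det_gt0] := spherical_triangle_cos al_pi be_pi ga_pi t1 t2 t3 t4.
have [U0 [U1 [U2 [free [[g00 g11 g22] [g01 g02 g12]]]]]] :=
  gram3_realizable (vnorm_gt0 ij0) (vnorm_gt0 ik0) (vnorm_gt0 jk0) ca1 det_gt0.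
exists U0, U1, U2; split=> //; split; first by split; exact: det2_neq0.
rewrite /gram2_eq g00 g11 g22 g01 g02 g12 Dal Dbe Dga -!vnorm_sqr.
by rewrite (common_line_vnorm ij) (common_line_vnorm ik) (common_line_vnorm jk).
Qed.

End CommonLinesTriple.
End Realization.

Theorem proposition1 (R : realType) (N : nat) (v : 'I_N -> 'I_N -> 'cV[R]_2)
  (i j k : 'I_N) :
  common_lines_data v ->
  i != j -> i != k -> j != k ->
  strict_spherical_triangle v i j k ->
  exists Fi Fj Fk : frame R,
    [/\ is_frame Fi, is_frame Fj, is_frame Fk & generic3 Fi Fj Fk] /\
    [/\ realizes Fi Fj (v i j) (v j i),
        realizes Fi Fk (v i k) (v k i),
        realizes Fj Fk (v j k) (v k j) &
        forall Gi Gj Gk : frame R,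
          is_frame Gi -> is_frame Gj -> is_frame Gk ->
          realizes Gi Gj (v i j) (v j i) ->
          realizes Gi Gk (v i k) (v k i) ->
          realizes Gj Gk (v j k) (v k j) ->
          exists A : 'M[R]_3, orthogonal3 A /\
            (act A Fi, act A Fj, act A Fk) = (Gi, Gj, Gk)].
Proof.
move=> cl ij ik jk triangle.
have [U0 [U1 [U2 [free [[di dj dk] [gi gj gk]]]]]] := common_lines_gram cl ij ik jk triangle.
have [Fi fi [Fi_ij Fi_ik]] := exists_frame_through di gi.
have [Fj fj [Fj_ji Fj_jk]] := exists_frame_through dj gj.
have [Fk fk [Fk_ki Fk_kj]] := exists_frame_through dk gk.
have rij : realizes Fi Fj (v i j) (v j i) by rewrite /realizes Fi_ij Fj_ji.
have rik : realizes Fi Fk (v i k) (v k i) by rewrite /realizes Fi_ik Fk_ki.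
have rjk : realizes Fj Fk (v j k) (v k j) by rewrite /realizes Fj_jk Fk_kj.
have freeF : mx_of_cols (cols3 (Defs.iota Fi (v i j)) (Defs.iota Fi (v i k))
                               (Defs.iota Fj (v j k))) \in unitmx.
  by rewrite Fi_ij Fi_ik Fj_jk.
exists Fi, Fj, Fk; split.
  by split => //; exact: generic3_of_free di dj dk rij rik rjk freeF.
by split => //; exact: realizing_frames_unique di dj dk rij rik rjk freeF fi fj fk.
Qed.
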